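(* Let $E$ be a topological space, let $\Omega\subseteq E$ be a non-empty relatively compact open set with $\partial\Omega\neq\emptyset$, and let $Y$ be a real locally convex Hausdorff topological vector space. Let $g:\overline{\Omega}\to Y$ be continuous and let $f=g|_{\Omega}$. Then the following are equivalent: (c1) $f$ satisfies the convex hull-like property in $\Omega$; (c2) $g$ satisfies the convex hull property in $\overline{\Omega}$, i.e. $g(\Omega)\subseteq\overline{\mathrm{conv}}(g(\partial\Omega))$.
   Context: $\overline{\Omega}$ and $\partial\Omega$ are the closure and boundary of $\Omega$ in $E$; $\overline{\mathrm{conv}}(S)$ is the closed convex hull of $S$. A function $\psi:Y\to\mathbf{R}$ is quasi-convex if for each $r\in\mathbf{R}$ the set $\psi^{-1}(]-\infty,r])$ is convex. A continuous function $f:\Omega\to Y$ satisfies the convex hull-like property in $\Omega$ if for every continuous quasi-convex $\psi:Y\to\mathbf{R}$ there exists $x^*\in\partial\Omega$ such that $\limsup_{x\to x^*,\,x\in\Omega}\psi(f(x))=\sup_{x\in\Omega}\psi(f(x))$. *)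

From HB Require Import structures.
From mathcomp Require Import all_boot all_order all_algebra.
From mathcomp Require Import all_classical all_reals all_analysis.
Set Implicit Arguments. Unset Strict Implicit. Unset Printing Implicit Defensive.
Import Order.TTheory GRing.Theory Num.Theory numFieldTopology.Exports.
Local Open Scope classical_set_scope.
Local Open Scope ring_scope.

Definition boundary (T : topologicalType) (A : set T) : set T :=
  closure A `\` interior A.

Definition relatively_compact (T : topologicalType) (A : set T) : Prop :=
  compact (closure A).

Definition closed_conv_hull (R : realType) (Y : tvsType R) (S : set Y) : set Y :=
  \bigcap_(C in [set C : set Y | closed C /\ convex_set C /\ S `<=` C]) C.

Definition quasi_convex (R : realType) (Y : tvsType R) (psi : Y -> R) : Prop :=
  forall r : R, convex_set [set y : Y | psi y <= r].

Definition convex_hull_like (R : realType) (E : topologicalType) (Y : tvsType R)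
    (Omega : set E) (f : E -> Y) : Prop :=
  forall psi : Y -> R, continuous psi -> quasi_convex psi ->
    exists2 xs, boundary Omega xs &
      limf_esup (fun x => (psi (f x))%:E) (within Omega (nbhs xs))
      = ereal_sup [set (psi (f x))%:E | x in Omega].

Definition convex_hull_prop (R : realType) (E : topologicalType) (Y : tvsType R)
    (Omega : set E) (g : E -> Y) : Prop :=
  g @` Omega `<=` closed_conv_hull (g @` boundary Omega).

From HB Require Import structures.
From mathcomp Require Import all_boot all_order all_algebra.
From mathcomp Require Import all_classical all_reals all_analysis.
From mathcomp Require Import ring lra.
Set Implicit Arguments. Unset Strict Implicit. Unset Printing Implicit Defensive.
Import Order.TTheory GRing.Theory Num.Theory numFieldTopology.Exports.
Local Open Scope classical_set_scope.
Local Open Scope ring_scope.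

(* Let K be the closed convex hull of g(boundary Omega).  A continuous
   quasi-convex psi has closed convex sublevel sets; so if g(Omega) lies in K,
   the sublevel set of psi at the maximum of psi o g over the compact boundary,
   attained at some xs, contains g(Omega).  Hence sup_Omega psi o g = psi (g xs),
   which is also the limsup at xs by continuity of g up to the boundary.
   Conversely, if g x0 is not in K, local convexity of Y yields a convex
   neighbourhood of g x0 missing K, and a Minkowski gauge built from it is a
   continuous quasi-convex psi with psi < 1 on K and psi (g x0) >= 1; then the
   limsup of psi o g at every boundary point is < 1, below its sup on Omega. *)

Lemma convex_setP (R : numDomainType) (M : lmodType R) (A : set M) : convex_set A <->
  (forall x y l, A x -> A y -> 0 <= l <= 1 -> A (l *: x + (1 - l) *: y)).
Proof.
split => [cA x y l Ax Ay /andP[l0 l1] | cA x y l /set_mem Ax /set_mem Ay].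
  by have := cA x y (Itv01 l0 l1) (mem_set Ax) (mem_set Ay); rewrite inE.
by apply/mem_set/cA => //; rewrite ge0 le1.
Qed.

Lemma convex_combDr (R : numDomainType) (M : lmodType R) (x y c : M) l :
  l *: (x + c) + (1 - l) *: (y + c) = l *: x + (1 - l) *: y + c.
Proof. by rewrite !scalerDr addrACA -scalerDl subrKC scale1r. Qed.

Lemma convex_combB (R : numDomainType) (M : lmodType R) (x y x' y' : M) l :
  l *: (x - x') + (1 - l) *: (y - y') =
  l *: x + (1 - l) *: y - (l *: x' + (1 - l) *: y').
Proof. by rewrite !scalerBr addrACA opprD. Qed.

Lemma convex_set_shift (R : numDomainType) (M : lmodType R) (A : set M) c :
  convex_set A -> convex_set [set x | A (x + c)].
Proof.
move=> /convex_setP cA; apply/convex_setP => x y l Axc Ayc l01 /=.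
by rewrite -convex_combDr; exact: cA.
Qed.

Lemma subl_continuous (M : topologicalZmodType) (c : M) : continuous (fun w => w - c).
Proof.
move=> w; apply: (@continuous_comp _ _ _ (fun w => (w, c)) (fun x : M * M => x.1 - x.2)).
  by apply: cvg_pair; [exact: cvg_id | exact: cvg_cst].
exact: sub_continuous.
Qed.

Lemma subr_continuous (M : topologicalZmodType) (a : M) : continuous (fun w => a - w).
Proof.
move=> w; apply: (@continuous_comp _ _ _ (fun w => (a, w)) (fun x : M * M => x.1 - x.2)).
  by apply: cvg_pair; [exact: cvg_cst | exact: cvg_id].
exact: sub_continuous.
Qed.

Lemma open_scale_nbhs (R : numFieldType) (Y : tvsType R) (C : set Y) (r0 : R) (z : Y) :
  open C -> C (r0 *: z) -> \forall r \near r0, C (r *: z).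
Proof.
move=> oC Cz; have /= := @scale_continuous R Y (r0, z) C (open_nbhs_nbhs (conj oC Cz)).
move=> [B [B1 B2] BC]; apply: filterS B1 => r Br.
by apply: (BC (r, z)); split => //; exact: nbhs_singleton.
Qed.

Section minkowski_gauge.
Variables (R : realType) (Y : tvsType R) (C : set Y).

Definition gauge_set (z : Y) := [set t : R | 0 < t /\ C (t^-1 *: z)].
Definition gauge (z : Y) := inf (gauge_set z).

Lemma gauge_le z t : 0 < t -> C (t^-1 *: z) -> gauge z <= t.
Proof. by move=> t0 Ct; apply: ge_inf => //; exists 0 => s [/ltW]. Qed.

Hypotheses (oC : open C) (cC : convex_set C) (C0 : C 0).

Lemma gauge_set_neq0 z : gauge_set z !=set0.
Proof.
have : \forall r \near (0 : R), C (r *: z) by apply: open_scale_nbhs; rewrite ?scale0r.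
move=> /nbhs_ballP[e e0 Ce]; exists (e / 2)^-1; split; first by rewrite invr_gt0 divr_gt0.
rewrite invrK; apply: Ce; rewrite /ball /= sub0r normrN ger0_norm ?divr_ge0 ?ltW //.
by rewrite ltr_pdivrMr // ltr_pMr // ltr1n.
Qed.

(* [C] is convex and contains [0], so [gauge_set z] is upward closed. *)
Lemma gauge_set_lt z t : gauge z < t -> gauge_set z t.
Proof.
move=> /(inf_lt (gauge_set_neq0 z))[s [s0 Cs] st].
have t0 : 0 < t by rewrite (lt_trans s0).
split => //.
have st1 : 0 <= s / t <= 1.
  by rewrite divr_ge0 ?ltW //= ltr_pdivrMr // mul1r.
have := (convex_setP C).1 cC _ _ _ Cs C0 st1.
by rewrite scaler0 addr0 scalerA mulrAC divff ?gt_eqF // mul1r.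
Qed.

Lemma gauge_lt1 z : C z -> gauge z < 1.
Proof.
move=> Cz; have : \forall r \near (1 : R), C (r *: z) by apply: open_scale_nbhs; rewrite ?scale1r.
move=> /nbhs_ballP[e e0 Ce].
have e1 : 1 < 1 + e / 2 by rewrite ltrDl divr_gt0.
apply: (@le_lt_trans _ _ (1 + e / 2)^-1); last by rewrite invf_lt1 // (lt_trans ltr01).
apply: gauge_le; first by rewrite invr_gt0 (lt_trans ltr01).
rewrite invrK; apply: Ce; rewrite /ball /= opprD addrA subrr sub0r normrN.
by rewrite ger0_norm ?divr_ge0 ?ltW // ltr_pdivrMr // ltr_pMr // ltr1n.
Qed.

Lemma gauge_ge1 z : ~ C z -> 1 <= gauge z.
Proof. by move=> nCz; rewrite leNgt; apply/negP => /gauge_set_lt[_]; rewrite invr1 scale1r. Qed.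

Lemma ler_gaugeD u v : gauge (u + v) <= gauge u + gauge v.
Proof.
apply/ler_addgt0Pr => e e0; have e2 : 0 < e / 2 by rewrite divr_gt0.
set s := gauge u + e / 2; set t := gauge v + e / 2.
have [s0 Cs] : gauge_set u s by apply: gauge_set_lt; rewrite ltrDl.
have [t0 Ct] : gauge_set v t by apply: gauge_set_lt; rewrite ltrDl.
have -> : gauge u + gauge v + e = s + t by rewrite /s /t; field.
have st0 : 0 < s + t by rewrite addr_gt0.
apply: gauge_le => //.
have l01 : 0 <= s / (s + t) <= 1.
  by rewrite divr_ge0 ?(ltW s0) ?(ltW st0) //= ler_pdivrMr // mul1r lerDl ltW.
have := (convex_setP C).1 cC _ _ _ Cs Ct l01.
have -> : 1 - s / (s + t) = t / (s + t) by field; rewrite gt_eqF.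
have k a : 0 < a -> a / (s + t) * a^-1 = (s + t)^-1.
  by move=> a0; rewrite mulrAC divff ?gt_eqF // mul1r.
by rewrite !scalerA !k // scalerDr.
Qed.

Lemma gauge_nbhs0 e : 0 < e -> \forall w \near (0 : Y), gauge w <= e.
Proof.
move=> e0; have : nbhs (0 : Y) C by exact: open_nbhs_nbhs.
move=> /(nbhs0Z (lt0r_neq0 e0)); apply: filterS => _ [c Cc <-].
by apply: gauge_le => //; rewrite scalerA mulVf ?gt_eqF // scale1r.
Qed.

Lemma gauge_continuous : continuous gauge.
Proof.
move=> z; apply/cvgrPdist_le => e e0.
have small : \forall v \near (0 : Y), gauge v <= e /\ gauge (- v) <= e.
  near=> v; split; near: v; first exact: gauge_nbhs0.
  by apply: filterS (nbhs0N (gauge_nbhs0 e0)) => _ [w we <-]; rewrite opprK.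
apply: filterS (nbhsT z small) => _ [v [ve vNe] <-] /=.
have := ler_gaugeD z v; have := ler_gaugeD (z + v) (- v).
rewrite addrK ler_norml => ? ?; apply/andP; split; lra.
Unshelve. all: by end_near. Qed.

Lemma gauge_quasi_convex : quasi_convex gauge.
Proof.
move=> r; apply/convex_setP => x y l /= xr yr l01.
apply/ler_addgt0Pr => e e0.
have [re0 Cx] : gauge_set x (r + e) by apply: gauge_set_lt; rewrite (le_lt_trans xr) ?ltrDl.
have [_ Cy] : gauge_set y (r + e) by apply: gauge_set_lt; rewrite (le_lt_trans yr) ?ltrDl.
apply: gauge_le => //.
have := (convex_setP C).1 cC _ _ _ Cx Cy l01.
by rewrite !scalerA ![_ * (r + e)^-1]mulrC -!scalerA -scalerDr.
Qed.

End minkowski_gauge.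

Lemma quasi_convex_shift (R : realType) (Y : tvsType R) (psi : Y -> R) c :
  quasi_convex psi -> quasi_convex (fun z => psi (z - c)).
Proof. by move=> qpsi r; exact: convex_set_shift (qpsi r). Qed.

Lemma quasi_convex_separation (R : realType) (Y : tvsType R) (K : set Y) y :
  closed K -> convex_set K -> K !=set0 -> ~ K y ->
  exists psi : Y -> R, [/\ continuous psi, quasi_convex psi,
    (forall k, K k -> psi k < 1) & 1 <= psi y].
Proof.
move=> clK cvK [k0 Kk0] nKy.
have [B cvB [Bo Bb]] := @locally_convex R Y.
have [U [BU Uy] UK] := Bb y (~` K) (open_nbhs_nbhs (conj (closed_openC clK) nKy)).
have cvU : convex_set U := cvB U (mem_set BU).
pose c := y - k0.
(* [C] is the Minkowski sum [(K - k0) + (y - U)]: an open convex set containing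
   [K - k0] but not [y - k0]. *)
pose C := \bigcup_(k in K) [set w | U (k + c - w)].
have C0 : C 0 by exists k0; rewrite //= subr0 addrC subrK.
have oC : open C.
  apply: bigcup_open => k _; apply: open_comp (Bo U BU) => w _.
  exact: subr_continuous.
have cvC : convex_set C.
  apply/convex_setP => w1 w2 l [k1 K1 U1] [k2 K2 U2] l01.
  exists (l *: k1 + (1 - l) *: k2); first exact: (convex_setP K).1 cvK _ _ _ K1 K2 l01.
  by rewrite /= -convex_combDr -convex_combB; exact: (convex_setP U).1 cvU _ _ _ U1 U2 l01.
exists (fun z => gauge C (z - k0)); split.
- move=> z; apply: (@continuous_comp _ _ _ (fun w => w - k0) (gauge C)).
    exact: subl_continuous.
  exact: gauge_continuous.
- exact/quasi_convex_shift/gauge_quasi_convex.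
- by move=> k Kk; apply: gauge_lt1 => //; exists k; rewrite //= addrCA addrK.
- by apply: gauge_ge1 => // -[k Kk]; rewrite /= addrK => /UK.
Qed.

Lemma closed_closed_conv_hull (R : realType) (Y : tvsType R) (S : set Y) :
  closed (closed_conv_hull S).
Proof. by apply: closed_bigI => C [cC _]. Qed.

Lemma convex_closed_conv_hull (R : realType) (Y : tvsType R) (S : set Y) :
  convex_set (closed_conv_hull S).
Proof.
apply/convex_setP => x y l hx hy l01 C /[dup] hC [_ [cvC _]].
exact: (convex_setP C).1 cvC _ _ _ (hx C hC) (hy C hC) l01.
Qed.

Lemma subset_closed_conv_hull (R : realType) (Y : tvsType R) (S : set Y) :
  S `<=` closed_conv_hull S.
Proof. by move=> s Ss C [_ [_ SC]]; exact: SC. Qed.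

Lemma closed_conv_hull_sub (R : realType) (Y : tvsType R) (S C : set Y) :
  closed C -> convex_set C -> S `<=` C -> closed_conv_hull S `<=` C.
Proof. by move=> cC vC SC x; apply. Qed.

Lemma compact_boundary (T : topologicalType) (A : set T) :
  relatively_compact A -> compact (boundary A).
Proof.
move=> cA; apply: subclosed_compact cA _; last by move=> x [].
rewrite /boundary setDE; apply: closedI; first exact: closed_closure.
by rewrite closedC; exact: open_interior.
Qed.

Lemma cvg_within_closure (T U : topologicalType) (A : set T) (g : T -> U) x :
  {within closure A, continuous g} -> closure A x -> g @ within A (nbhs x) --> g x.
Proof.
move=> /subspace_continuousP gc Ax; apply: cvg_trans (gc x Ax).
by apply: cvg_fmap2; apply: within_subset => //; exact: subset_closure.
Qed.

Section limf_esup_real.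
Local Open Scope ereal_scope.
Variables (T : topologicalType) (R : realType) (f : T -> R).

Lemma limf_esup_le_sup (F : set_system T) (A : set T) :
  F A -> limf_esup (fun x => (f x)%:E) F <= ereal_sup [set (f x)%:E | x in A].
Proof. by move=> FA; apply: ereal_inf_lbound; exists A. Qed.

Lemma limf_esup_le_cvg (F : set_system T) {FF : Filter F} (l : R) :
  f @ F --> l -> limf_esup (fun x => (f x)%:E) F <= l%:E.
Proof.
move=> fl; apply/lee_addgt0Pr => e e0.
have FA : F [set x | f x < l + e]%R by apply: (cvgr_lt l fl); rewrite ltrDl.
apply: le_trans (limf_esup_le_sup FA) _.
by apply: ge_ereal_sup => _ [x /ltW fx <-]; rewrite -EFinD lee_fin.
Qed.

Lemma limf_esup_within_ge (A : set T) x (l : R) :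
  closure A x -> f @ within A (nbhs x) --> l ->
  l%:E <= limf_esup (fun x => (f x)%:E) (within A (nbhs x)).
Proof.
move=> Ax fl; apply: le_ereal_inf_tmp => _ [V AV <-].
apply/lee_addgt0Pr => e e0.
have le : (l - e < l)%R by rewrite ltrBlDr ltrDl.
have fle := @cvgr_gt _ _ _ (within_filter A (nbhs_filter x)) _ l fl _ le.
have [t [At /(_ At) [Vt lt]]] := Ax _ (filterI AV fle).
have ftV : (f t)%:E <= ereal_sup [set (f x)%:E | x in V] by apply: ereal_sup_ubound; exists t.
by rewrite -leeBlDr // -EFinB (le_trans _ ftV) // lee_fin ltW.
Qed.

End limf_esup_real.

Lemma closed_sublevel (T : topologicalType) (R : realType) (psi : T -> R) r :
  continuous psi -> closed [set z | psi z <= r].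
Proof.
move=> psic; apply: (@preimage_closed _ _ psi [set s | s <= r]); last exact: closed_le.
by move=> z _; exact: psic.
Qed.

Section convex_hull_property.
Variables (R : realType) (E : topologicalType) (Y : tvsType R).
Variables (Omega : set E) (g : E -> Y).
Hypotheses (bOmega : boundary Omega !=set0) (gc : {within closure Omega, continuous g}).

Let psig_cvg (psi : Y -> R) x : continuous psi -> closure Omega x ->
  (psi \o g) @ within Omega (nbhs x) --> psi (g x).
Proof. by move=> psic Ox; apply: cvg_comp (cvg_within_closure gc Ox) (psic _). Qed.

Lemma convex_hull_like_prop : convex_hull_like Omega g -> convex_hull_prop Omega g.
Proof.
move=> chl _ [x0 Ox0 <-]; apply: contrapT => nK.
have [xb bxb] := bOmega.
have K_gxb := subset_closed_conv_hull (imageP g bxb).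
have [psi [psic psiq psiK psix0]] := quasi_convex_separation
  (closed_closed_conv_hull (S := _)) (convex_closed_conv_hull (S := _))
  (ex_intro _ _ K_gxb) nK.
have [xs bxs limsup_sup] := chl psi psic psiq.
have x0_sup : ((psi (g x0))%:E <= ereal_sup [set (psi (g x))%:E | x in Omega])%E.
  by apply: ereal_sup_ubound; exists x0.
have sup_xs : (ereal_sup [set (psi (g x))%:E | x in Omega] <= (psi (g xs))%:E)%E.
  by rewrite -limsup_sup; apply: limf_esup_le_cvg; exact: psig_cvg bxs.1.
have := le_trans x0_sup sup_xs; rewrite lee_fin.
have := psiK _ (subset_closed_conv_hull (imageP g bxs)); lra.
Qed.

Hypothesis rcOmega : relatively_compact Omega.

Lemma convex_hull_prop_like : convex_hull_prop Omega g -> convex_hull_like Omega g.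
Proof.
move=> chp psi psic psiq.
have bcl : boundary Omega `<=` closure Omega by move=> x [].
have psigc : {within boundary Omega, continuous (psi \o g)}.
  apply: continuous_subspaceW bcl _; apply/subspace_continuousP => x Ox.
  by move/subspace_continuousP: gc => /(_ x Ox) gcx; exact: cvg_comp gcx (psic _).
have [xs /set_mem bxs xs_max] := compact_EVT_max bOmega (compact_boundary rcOmega) psigc.
exists xs => //; apply: le_anti; apply/andP; split.
  by apply: limf_esup_le_sup; apply: nearW.
have xs_limsup := limf_esup_within_ge (bcl _ bxs) (psig_cvg psic (bcl _ bxs)).
apply: (le_trans _ xs_limsup).
apply: ge_ereal_sup => _ [x Ox <-]; rewrite lee_fin.
apply: (closed_conv_hull_sub (C := [set z | psi z <= psi (g xs)])) (chp _ (imageP g Ox)) => //.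
- exact: closed_sublevel.
- by move=> _ [b bb <-]; exact: xs_max (mem_set bb).
Qed.

End convex_hull_property.

Theorem proposition3 (R : realType) (E : topologicalType) (Y : tvsType R)
    (Omega : set E) (g : E -> Y) :
  open Omega -> Omega !=set0 -> relatively_compact Omega ->
  boundary Omega !=set0 -> hausdorff_space Y ->
  {within closure Omega, continuous g} ->
  (convex_hull_like Omega g <-> convex_hull_prop Omega g).
Proof.
move=> _ _ rcOmega bOmega _ gc.
by split; [exact: convex_hull_like_prop | exact: convex_hull_prop_like].
Qed.
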